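(* Let $R$ be a commutative Bezout domain. The ring $M_2(R)$ of $2\times 2$ matrices over $R$ has stable range 1.5 if and only if $R$ has stable range 1.5.
   Context: A commutative Bezout domain is a commutative integral domain with $1\ne0$ in which every finitely generated ideal is principal. $R$ has stable range 1.5 if for all $a,b\in R$ and $c\in R\setminus\{0\}$ with $(a,b,c)=1$ there is $r\in R$ with $(a+br,c)=1$. $M_2(R)$ has stable range 1.5 if for all $A,B,C\in M_2(R)$ with $C\neq 0$ which are left relatively prime, i.e. $AM_2(R)+BM_2(R)+CM_2(R)=M_2(R)$ (equivalently their left greatest common divisor is invertible), there exists $T\in M_2(R)$ such that $A+BT$ and $C$ are left relatively prime, i.e. $(A+BT)M_2(R)+CM_2(R)=M_2(R)$. *)

From HB Require Import structures.
From mathcomp Require Import all_boot all_order all_algebra.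
Set Implicit Arguments. Unset Strict Implicit. Unset Printing Implicit Defensive.
Import GRing.Theory.
Local Open Scope ring_scope.

Definition in_ideal (R : comNzRingType) (s : seq R) (r : R) : Prop :=
  exists c : 'I_(size s) -> R, r = \sum_(i < size s) c i * s`_i.

Definition bezout_domain (R : idomainType) : Prop :=
  forall s : seq R, exists d : R,
    forall r : R, in_ideal s r <-> exists u : R, r = u * d.

Definition stable_range_1_5 (R : comNzRingType) : Prop :=
  forall a b c : R, c != 0 -> in_ideal [:: a; b; c] 1 ->
    exists r : R, in_ideal [:: a + b * r; c] 1.

(* stable range 1.5 of M_2(R): left relatively prime means
   A M_2(R) + B M_2(R) + C M_2(R) = M_2(R) *)
Definition mat2_stable_range_1_5 (R : comNzRingType) : Prop :=
  forall A B C : 'M[R]_2, C != 0 ->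
    (exists X Y Z : 'M[R]_2, A * X + B * Y + C * Z = 1) ->
    exists T : 'M[R]_2, exists X Y : 'M[R]_2, (A + B * T) * X + C * Y = 1.

From mathcomp Require Import all_boot all_order all_algebra.
From mathcomp Require Import ring.
Set Implicit Arguments. Unset Strict Implicit. Unset Printing Implicit Defensive.
Import GRing.Theory.
Local Open Scope ring_scope.

(* Identify a 2x2 matrix with its two columns in R^2.  Then A, B, C are left
   relatively prime iff the six columns of A, B, C span R^2, and one looks for T
   such that the columns of A + BT and of C span R^2.  Swapping rows, assume the
   second row of C is nonzero and let g <> 0 generate the ideal of its entries;
   the columns of C span some n' with second coordinate g.
   The second coordinates of the six columns generate R, so stable range 1.5
   modulo g corrects the second column a2 of A by a combination of a1, b1, b2
   into some w whose second coordinate is prime to g; a further shift of w by a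
   multiple of g makes w and the columns of C span a submodule of rank 2.  This
   submodule contains p = (h, 1) and (c, 0) for some c <> 0.  Along the
   direction p the plane projects onto its first axis by x |-> x_0 - x_1 h, and
   stable range 1.5 modulo c corrects a1 so that its projection is prime to c;
   then (1, 0) and p, hence all of R^2, are spanned.
   Conversely, A = diag(a, 1), B = diag(b, 0) and C = c I turn the matrix
   condition into the scalar one. *)

Lemma big_ord2 (V : nmodType) (F : 'I_2 -> V) : \sum_(i < 2) F i = F 0 + F 1.
Proof. by rewrite !big_ord_recl big_ord0 addr0; congr (F _ + F _); apply: val_inj. Qed.

Lemma big_ord3 (V : nmodType) (F : 'I_3 -> V) : \sum_(i < 3) F i = F 0 + F 1 + F 2.
Proof. by rewrite !big_ord_recl big_ord0 addr0 addrA; congr (F _ + F _ + F _); apply: val_inj. Qed.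

Lemma in_idealP (R : comNzRingType) (s : seq R) (r : R) :
  in_ideal s r <-> exists cs : seq R, r = \sum_(i < size s) cs`_i * s`_i.
Proof.
split=> [[c ->]|[cs ->]]; last by exists (fun i => cs`_i).
exists [seq c i | i <- enum 'I_(size s)]; apply: eq_bigr => i _.
by rewrite (nth_map i) ?nth_ord_enum // size_enum_ord.
Qed.

Lemma in_ideal2 (R : comNzRingType) (x y r : R) :
  in_ideal [:: x; y] r <-> exists p q, r = p * x + q * y.
Proof.
rewrite in_idealP; split=> [[cs ->]|[p [q ->]]]; last by exists [:: p; q]; rewrite big_ord2.
by exists cs`_0, cs`_1; rewrite big_ord2.
Qed.

Local Notation e0 := (delta_mx 0 0 : 'cV_2).

Section Submodules.
Variables (R : comNzRingType) (n : nat).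
Implicit Types (M : 'cV[R]_n -> Prop) (gs hs : seq 'cV[R]_n) (u v : 'cV[R]_n).

Definition submodule M := M 0 /\ forall a u v, M u -> M v -> M (a *: u + v).

Definition in_span gs v := exists c : 'I_(size gs) -> R, v = \sum_(i < size gs) c i *: gs`_i.

Definition spanning gs := forall v, in_span gs v.

Lemma in_spanP gs v :
  in_span gs v <-> exists cs : seq R, v = \sum_(i < size gs) cs`_i *: gs`_i.
Proof.
split=> [[c ->]|[cs ->]]; last by exists (fun i => cs`_i).
exists [seq c i | i <- enum 'I_(size gs)]; apply: eq_bigr => i _.
by rewrite (nth_map i) ?nth_ord_enum // size_enum_ord.
Qed.

Lemma submodule_sum M k (c : 'I_k -> R) (g : 'I_k -> 'cV[R]_n) :
  submodule M -> (forall i, M (g i)) -> M (\sum_i c i *: g i).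
Proof.
move=> [M0 MD] Mg; elim/big_ind: _ => // [u v Mu Mv|i _]; first by rewrite -[u]scale1r; exact: MD.
by rewrite -[_ *: _]addr0; exact: MD.
Qed.

Lemma in_span_submodule gs : submodule (in_span gs).
Proof.
split=> [|a _ _ [c ->] [d ->]]; first by exists (fun=> 0); rewrite big1 // => i _; rewrite scale0r.
exists (fun i => a * c i + d i); rewrite scaler_sumr -big_split; apply: eq_bigr => i _.
by rewrite scalerDl scalerA.
Qed.

Lemma in_span_min M gs v : submodule M -> {in gs, forall u, M u} -> in_span gs v -> M v.
Proof. by move=> hM Mgs [c ->]; apply: submodule_sum => // i; apply/Mgs/mem_nth. Qed.

Lemma in_span_mem gs v : v \in gs -> in_span gs v.
Proof.
move=> vgs; have ltv : (index v gs < size gs)%N by rewrite index_mem.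
exists (fun i => (i == Ordinal ltv)%:R).
rewrite (bigD1 (Ordinal ltv)) //= eqxx scale1r nth_index //.
by rewrite big1 ?addr0 // => i /negbTE ->; rewrite scale0r.
Qed.

Lemma in_span0 gs : in_span gs 0.
Proof. exact: (in_span_submodule gs).1. Qed.

Lemma in_spanZ gs a v : in_span gs v -> in_span gs (a *: v).
Proof.
have [span0 spanD] := in_span_submodule gs.
by move=> hv; rewrite -[_ *: _]addr0; exact: spanD.
Qed.

Lemma in_spanD gs u v : in_span gs u -> in_span gs v -> in_span gs (u + v).
Proof. by move=> hu hv; rewrite -[u]scale1r; exact: (in_span_submodule gs).2 hu hv. Qed.

Lemma in_spanB gs u v : in_span gs u -> in_span gs v -> in_span gs (u - v).
Proof. by move=> hu hv; rewrite -scaleN1r; apply: in_spanD => //; exact: in_spanZ. Qed.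

Lemma in_span_trans gs hs v :
  {in gs, forall u, in_span hs u} -> in_span gs v -> in_span hs v.
Proof. by apply: in_span_min; exact: in_span_submodule. Qed.

Lemma in_span_sub gs hs v : {subset gs <= hs} -> in_span gs v -> in_span hs v.
Proof. by move=> sub; apply: in_span_trans => u /sub; exact: in_span_mem. Qed.

Lemma spanning_trans gs hs :
  spanning gs -> {in gs, forall u, in_span hs u} -> spanning hs.
Proof. by move=> span_gs gs_hs v; exact: in_span_trans (span_gs v). Qed.

Lemma spanning_shift gs1 gs2 x y :
  in_span (gs1 ++ gs2) y -> spanning (gs1 ++ x :: gs2) -> spanning (gs1 ++ x + y :: gs2).
Proof.
have sub : {subset gs1 ++ gs2 <= gs1 ++ x + y :: gs2}.
  by move=> u; rewrite !mem_cat inE => /orP[] ->; rewrite ?orbT.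
move=> hy span_x; apply: spanning_trans span_x _ => u.
rewrite mem_cat inE orbCA => /predU1P[->|hu]; last by apply/in_span_mem/sub; rewrite mem_cat.
have hxy : in_span (gs1 ++ x + y :: gs2) (x + y).
  by apply: in_span_mem; rewrite mem_cat inE eqxx orbT.
by have := in_spanB hxy (in_span_sub sub hy); rewrite addrK.
Qed.
End Submodules.

Section ColumnSpan.
Variables (R : comNzRingType) (n : nat).

Definition cols k (A : 'M[R]_(n, k)) := [seq col j A | j <- enum 'I_k].

Lemma mulmx_sum_col k (A : 'M[R]_(n, k)) (x : 'cV_k) : A *m x = \sum_j x j 0 *: col j A.
Proof. by apply/colP => i; rewrite !(mxE, summxE); apply: eq_bigr => j _; rewrite !mxE mulrC. Qed.

Lemma submodule_mulmx k M (A : 'M[R]_(n, k)) x :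
  submodule M -> (forall j, M (col j A)) -> M (A *m x).
Proof. by move=> hM hA; rewrite mulmx_sum_col; exact: submodule_sum. Qed.

Lemma col_in_cols k (A : 'M[R]_(n, k)) j : col j A \in cols A.
Proof. by apply: map_f; rewrite mem_enum. Qed.

Lemma spanning_of_mulmx (A B C X Y Z : 'M[R]_n) :
  A *m X + B *m Y + C *m Z = 1%:M -> spanning (cols A ++ cols B ++ cols C).
Proof.
move=> hXYZ v; have [span0 spanD] := in_span_submodule (cols A ++ cols B ++ cols C).
have span_mul D W : {subset cols D <= cols A ++ cols B ++ cols C} ->
    in_span (cols A ++ cols B ++ cols C) (D *m W *m v).
  move=> sub; rewrite -mulmxA; apply: submodule_mulmx => [|j]; first exact: in_span_submodule.
  exact/in_span_mem/sub/col_in_cols.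
rewrite -[v]mul1mx -hXYZ !mulmxDl; apply: in_spanD; first apply: in_spanD.
all: apply: span_mul => u hu; rewrite !mem_cat hu ?orbT //.
Qed.

Lemma mulmx_of_spanning (A C : 'M[R]_n) :
  spanning (cols A ++ cols C) -> exists X Y, A *m X + C *m Y = 1%:M.
Proof.
pose M v := exists xy : 'cV[R]_n * 'cV[R]_n, v = A *m xy.1 + C *m xy.2.
have hM : submodule M.
  split=> [|a _ _ [[x y] ->] [[x' y'] ->]]; first by exists (0, 0); rewrite !mulmx0 addr0.
  by exists (a *: x + x', a *: y + y'); rewrite /= !mulmxDr -!scalemxAr scalerDr addrACA.
have M_cols : {in cols A ++ cols C, forall u, M u}.
  move=> u; rewrite mem_cat => /orP[] /mapP[j _ ->].
    by exists (delta_mx j 0, 0); rewrite /= mulmx0 addr0 colE.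
  by exists (0, delta_mx j 0); rewrite /= mulmx0 add0r colE.
move=> span_AC; have /fin_all_exists[f hf] : forall j, M (col j 1%:M).
  by move=> j; exact: in_span_min hM M_cols (span_AC _).
exists (\matrix_(i, j) (f j).1 i 0), (\matrix_(i, j) (f j).2 i 0).
apply/row_matrixP => i; apply/rowP => j; move/colP: (hf j) => /(_ i).
by rewrite !(mxE, summxE) => ->; congr (_ + _); apply: eq_bigr => l _; rewrite !mxE.
Qed.
End ColumnSpan.

Section Plane.
Variable R : comNzRingType.
Implicit Types (u v w p : 'cV[R]_2) (gs : seq 'cV[R]_2).

Lemma ord2P (i : 'I_2) : i = 0 \/ i = 1.
Proof. by case: i => -[|[|//]] i; [left | right]; exact: val_inj. Qed.

Lemma cV2P u v : u 0 0 = v 0 0 -> u 1 0 = v 1 0 -> u = v.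
Proof. by move=> h0 h1; apply/colP => i; case: (ord2P i) => ->. Qed.

Lemma mx2P (A B : 'M[R]_2) :
  A 0 0 = B 0 0 -> A 0 1 = B 0 1 -> A 1 0 = B 1 0 -> A 1 1 = B 1 1 -> A = B.
Proof. by move=> *; apply/matrixP => i j; case: (ord2P i) => ->; case: (ord2P j) => ->. Qed.

Lemma cols2 (A : 'M[R]_2) : cols A = [:: col 0 A; col 1 A].
Proof.
rewrite /cols enum_ordSl enum_ordSl enum_ord0 /=.
by congr [:: col _ A; col _ A]; exact: val_inj.
Qed.

Lemma mulmx2E (A B : 'M[R]_2) i j : (A * B) i j = A i 0 * B 0 j + A i 1 * B 1 j.
Proof. by rewrite -mulmxE mxE big_ord2. Qed.

Definition mx22 (a b c d : R) : 'M[R]_2 := \matrix_(i, j) (nth [::] [:: [:: a; b]; [:: c; d]] i)`_j.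

Lemma col_add_mul2 (A B T : 'M[R]_2) j :
  col j (A + B * T) = col j A + T 0 j *: col 0 B + T 1 j *: col 1 B.
Proof. by apply/colP => i; rewrite !mxE big_ord2; ring. Qed.

Definition det2 u v := u 0 0 * v 1 0 - u 1 0 * v 0 0.

Lemma det2_linear u v w a : det2 u (a *: v + w) = a * det2 u v + det2 u w.
Proof. by rewrite /det2 !mxE; ring. Qed.

Lemma det2_in_span gs u v : in_span gs u -> in_span gs v -> in_span gs (det2 u v *: e0).
Proof.
have -> : det2 u v *: e0 = v 1 0 *: u - u 1 0 *: v by apply: cV2P; rewrite !mxE /det2 /=; ring.
by move=> hu hv; apply: in_spanB; exact: in_spanZ.
Qed.

Lemma spanning_det2_neq0 u gs : u 1 0 != 0 -> spanning gs -> exists2 v, v \in gs & det2 u v != 0.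
Proof.
move=> u1 span_gs; apply/hasP; apply: contraNT u1 => /hasPn gs_ker.
have ker : submodule (fun v => det2 u v = 0).
  split=> [|a v w hv hw]; first by rewrite /det2 !mxE !mulr0 subrr.
  by rewrite det2_linear hv hw mulr0 addr0.
have : det2 u e0 = 0 by apply: in_span_min ker _ (span_gs e0) => v /gs_ker /negPn /eqP.
by rewrite /det2 !mxE /= mulr0 mulr1 sub0r => /eqP; rewrite oppr_eq0.
Qed.

(* The coordinate of v along e0 in the basis (e0, p), when p 1 0 = 1. *)
Definition axis_coord p v := v 0 0 - v 1 0 * p 0 0.

Lemma spanning_of_axis gs p a c k l :
  in_span gs p -> p 1 0 = 1 -> in_span gs a -> in_span gs (c *: e0) ->
  k * axis_coord p a + l * c = 1 -> spanning gs.
Proof.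
move=> hp p1 ha hc hkl; have he0 : in_span gs e0.
  have -> : e0 = k *: (a - a 1 0 *: p) + l *: (c *: e0).
    apply: cV2P; rewrite !mxE /= ?p1; last by ring.
    by rewrite -[LHS]hkl /axis_coord; ring.
  by apply: in_spanD; apply: in_spanZ => //; apply: in_spanB => //; exact: in_spanZ.
move=> v; have -> : v = axis_coord p v *: e0 + v 1 0 *: p.
  by apply: cV2P; rewrite !mxE /= ?p1 /axis_coord; ring.
by apply: in_spanD; exact: in_spanZ.
Qed.
End Plane.

Section LeftCoprime.
Variable S : unitRingType.
Implicit Types P A B C : S.

Definition left_coprime A C := exists X Y, A * X + C * Y = 1.

Definition left_coprime3 A B C := exists X Y Z, A * X + B * Y + C * Z = 1.

Lemma left_coprime3_mull P A B C : P \is a GRing.unit ->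
  left_coprime3 A B C -> left_coprime3 (P * A) (P * B) (P * C).
Proof.
move=> uP [X [Y [Z h]]]; exists (X / P), (Y / P), (Z / P).
by rewrite !mulrA -!mulrDl -!(mulrA P) -!mulrDr h mulr1 mulrV.
Qed.

Lemma left_coprime_mull P A C : P \is a GRing.unit ->
  left_coprime (P * A) (P * C) -> left_coprime A C.
Proof.
move=> uP [X [Y h]]; exists (X * P), (Y * P).
have hinv : A * X + C * Y = P^-1 by apply: (mulrI uP); rewrite mulrV // mulrDr !mulrA.
by rewrite !mulrA -mulrDl hinv mulVr.
Qed.
End LeftCoprime.

Section BezoutStableRange.
Variable R : idomainType.
Hypothesis bezoutR : bezout_domain R.
Hypothesis srR : stable_range_1_5 R.

Lemma bezout_gcd2 (x y : R) :
  exists g u v k l, [/\ g = u * x + v * y, x = k * g & y = l * g].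
Proof.
have [g hg] := bezoutR [:: x; y].
have [k hk] : exists k, x = k * g by apply/hg/in_ideal2; exists 1, 0; ring.
have [l hl] : exists l, y = l * g by apply/hg/in_ideal2; exists 0, 1; ring.
have [u [v huv]] : exists u v, g = u * x + v * y by apply/in_ideal2/hg; exists 1; ring.
by exists g, u, v, k, l.
Qed.

Lemma stable_range_1_5_sum (a c : R) (bs : seq R) : c != 0 -> in_ideal [:: a, c & bs] 1 ->
  exists t : 'I_(size bs) -> R, in_ideal [:: a + \sum_i t i * bs`_i; c] 1.
Proof.
move=> c0 [x]; rewrite !big_ord_recl /= => hx.
have [d hd] := bezoutR bs.
have [u hu] : exists u, \sum_i x (lift ord0 (lift ord0 i)) * bs`_i = u * d.
  by apply/hd; exists (fun i => x (lift ord0 (lift ord0 i))).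
have [y hy] : in_ideal bs d by apply/hd; exists 1; rewrite mul1r.
have [|r hr] := srR c0 (_ : in_ideal [:: a; d; c] 1).
  apply/in_idealP; exists [:: x ord0; u; x (lift ord0 ord0)].
  by rewrite !big_ord_recl big_ord0 /= hx -hu; ring.
exists (fun i => y i * r); congr (in_ideal [:: a + _; c] 1): hr.
by rewrite hy mulr_suml; apply: eq_bigr => i _; ring.
Qed.

Lemma axis_coord_ideal (a w b1 b2 p : 'cV[R]_2) (N : seq 'cV[R]_2) :
  spanning [:: a, w, b1, b2 & N] -> in_span (w :: N) p -> p 1 0 = 1 ->
  exists j, in_span (w :: N) (j *: e0) /\ exists x y z,
    1 = x * axis_coord p a + y * axis_coord p b1 + z * axis_coord p b2 + j.
Proof.
move=> span_all hp p1.
pose M v := exists j, in_span (w :: N) (j *: e0) /\ exists x y z,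
  axis_coord p v = x * axis_coord p a + y * axis_coord p b1 + z * axis_coord p b2 + j.
have hM : submodule M.
  split=> [|k u v [j [hj [x [y [z hu]]]]] [j' [hj' [x' [y' [z' hv]]]]]].
    exists 0; split; first by rewrite scale0r; exact: in_span0.
    by exists 0, 0, 0; rewrite /axis_coord !mxE; ring.
  exists (k * j + j'); split.
    by rewrite scalerDl -scalerA; apply: in_spanD => //; exact: in_spanZ.
  exists (k * x + x'), (k * y + y'), (k * z + z').
  have -> : axis_coord p (k *: u + v) = k * axis_coord p u + axis_coord p v.
    by rewrite /axis_coord !mxE; ring.
  by rewrite hu hv; ring.
have M_span u : in_span (w :: N) u -> M u.
  move=> hu; exists (axis_coord p u); split; last by exists 0, 0, 0; ring.
  have -> : axis_coord p u *: e0 = u - u 1 0 *: p.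
    by apply: cV2P; rewrite !mxE /= ?p1 /axis_coord; ring.
  by apply: in_spanB => //; exact: in_spanZ.
have M_gen x y z v :
    axis_coord p v = x * axis_coord p a + y * axis_coord p b1 + z * axis_coord p b2 -> M v.
  move=> hv; exists 0; split; first by rewrite scale0r; exact: in_span0.
  by exists x, y, z; rewrite hv addr0.
have [j [hj [x [y [z he0]]]]] : M e0.
  apply: in_span_min hM _ (span_all e0) => v.
  rewrite !inE => /or4P[/eqP->|/eqP->|/eqP->|/orP[/eqP->|hv]].
  - by apply: (M_gen 1 0 0); ring.
  - by apply/M_span/in_span_mem/mem_head.
  - by apply: (M_gen 0 1 0); ring.
  - by apply: (M_gen 0 0 1); ring.
  - by apply/M_span/in_span_mem; rewrite inE hv orbT.
by exists j; split => //; exists x, y, z; rewrite -he0 /axis_coord !mxE /=; ring.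
Qed.

Lemma exists_first_column (a w b1 b2 p : 'cV[R]_2) (N : seq 'cV[R]_2) (c : R) :
  spanning [:: a, w, b1, b2 & N] -> in_span (w :: N) p -> p 1 0 = 1 ->
  c != 0 -> in_span (w :: N) (c *: e0) ->
  exists t1 t2, spanning [:: a + t1 *: b1 + t2 *: b2, w & N].
Proof.
move=> span_all hp p1 c0 hc.
have [j [hj [x [y [z hxyz]]]]] := axis_coord_ideal span_all hp p1.
have [c' [c'0 hc' hid]] : exists c', [/\ c' != 0, in_span (w :: N) (c' *: e0) &
    in_ideal [:: axis_coord p a, c' & [:: axis_coord p b1; axis_coord p b2]] 1].
  have [j0 | j0] := eqVneq j 0; [exists c | exists j]; split => //; apply/in_idealP.
    by exists [:: x; 0; y; z]; rewrite !big_ord_recl big_ord0 /= [LHS]hxyz j0; ring.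
  by exists [:: x; 1; y; z]; rewrite !big_ord_recl big_ord0 /= [LHS]hxyz; ring.
have [t /in_ideal2[k [l hkl]]] := stable_range_1_5_sum c'0 hid.
have sub : {subset w :: N <= a + t 0 *: b1 + t 1 *: b2 :: w :: N}.
  by move=> u hu; rewrite inE hu orbT.
exists (t 0), (t 1).
apply: (spanning_of_axis (k := k) (l := l) (in_span_sub sub hp) p1 _ (in_span_sub sub hc')).
  exact/in_span_mem/mem_head.
by rewrite [RHS]hkl big_ord2 /axis_coord !mxE /=; ring.
Qed.

Lemma exists_shift_det2_neq0 (a1 w b1 b2 n1 n2 x : 'cV[R]_2) (g : R) :
  g != 0 -> x 1 0 != 0 -> det2 x n1 = 0 -> det2 x n2 = 0 ->
  spanning [:: a1; w; b1; b2; n1; n2] ->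
  exists2 z, in_span [:: a1; b1; b2] z & det2 x (w + g *: z) != 0.
Proof.
move=> g0 x0 xn1 xn2 span_all.
have [xw | xw] := eqVneq (det2 x w) 0; last first.
  by exists 0; rewrite ?scaler0 ?addr0 //; exact: in_span0.
have [z hz xz] := spanning_det2_neq0 x0 span_all.
exists z; last by rewrite addrC det2_linear xw addr0 mulf_neq0.
apply: in_span_mem; move: hz xz; rewrite !inE.
by case/or4P => [->|/eqP->|->|/orP[->|/orP[]/eqP->]]; rewrite ?orTb ?orbT ?xw ?xn1 ?xn2 ?eqxx.
Qed.

Lemma spanning_shift_second (a1 a2 w b1 b2 : 'cV[R]_2) (N : seq 'cV[R]_2) :
  in_span [:: a1; b1; b2] (w - a2) ->
  spanning [:: a1, a2, b1, b2 & N] -> spanning [:: a1, w, b1, b2 & N].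
Proof.
move=> hw; have -> : w = a2 + (w - a2) by rewrite addrC subrK.
apply: (spanning_shift (gs1 := [:: a1])).
by apply: in_span_sub hw => x; rewrite !inE => /or3P[]->; rewrite ?orbT.
Qed.

Lemma exists_coprime_second_coord (a1 a2 b1 b2 n1 n2 : 'cV[R]_2) (g k1 k2 : R) :
  g != 0 -> n1 1 0 = k1 * g -> n2 1 0 = k2 * g -> spanning [:: a1; a2; b1; b2; n1; n2] ->
  exists2 w, in_span [:: a1; b1; b2] (w - a2) & exists k l, w 1 0 * k + g * l = 1.
Proof.
move=> g0 hk1 hk2 span_all.
have /in_spanP[cs /(congr1 (fun v : 'cV[R]_2 => v 1 0))] := span_all (delta_mx 1 0).
rewrite !(mxE, summxE) !big_ord_recl big_ord0 /= /bump /= !mxE => hcs.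
have hid : in_ideal [:: a2 1 0, g & [:: a1 1 0; b1 1 0; b2 1 0]] 1.
  apply/in_idealP; exists [:: cs`_1; cs`_4 * k1 + cs`_5 * k2; cs`_0; cs`_2; cs`_3].
  by rewrite !big_ord_recl big_ord0 /= [LHS]hcs hk1 hk2; ring.
have [t /in_ideal2[k [l hkl]]] := stable_range_1_5_sum g0 hid.
exists (a2 + t 0 *: a1 + t 1 *: b1 + t 2 *: b2).
  have -> : a2 + t 0 *: a1 + t 1 *: b1 + t 2 *: b2 - a2 = t 0 *: a1 + t 1 *: b1 + t 2 *: b2.
    by apply: cV2P; rewrite !mxE; ring.
  by apply: in_spanD; [apply: in_spanD|]; apply/in_spanZ/in_span_mem; rewrite !inE eqxx ?orbT.
by exists k, l; rewrite [RHS]hkl big_ord3 !mxE /=; ring.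
Qed.

Lemma exists_second_column (a1 a2 b1 b2 n1 n2 : 'cV[R]_2) :
  (n1 1 0 != 0) || (n2 1 0 != 0) -> spanning [:: a1; a2; b1; b2; n1; n2] ->
  exists2 w, in_span [:: a1; b1; b2] (w - a2) &
    (exists2 p, in_span [:: w; n1; n2] p & p 1 0 = 1) /\
    (exists2 c, c != 0 & in_span [:: w; n1; n2] (c *: e0)).
Proof.
move=> n0 span_all.
have [g [u [v [k1 [k2 [hg hk1 hk2]]]]]] := bezout_gcd2 (n1 1 0) (n2 1 0).
have g0 : g != 0 by apply: contraTneq n0 => g0; rewrite hk1 hk2 g0 !mulr0 eqxx.
pose n' := u *: n1 + v *: n2.
have n'2 : n' 1 0 = g by rewrite !mxE hg.
have hn' w : in_span [:: w; n1; n2] n'.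
  by apply: in_spanD; apply/in_spanZ/in_span_mem; rewrite !inE eqxx ?orbT.
have [w0 hw0 [k [l hkl]]] := exists_coprime_second_coord g0 hk1 hk2 span_all.
have span_w0 := spanning_shift_second hw0 span_all.
have [z hz hdz] : exists2 z, in_span [:: a1; b1; b2] z &
    det2 n1 n2 != 0 \/ det2 n' (w0 + g *: z) != 0.
  have [D|D] := eqVneq (det2 n1 n2) 0; last by exists 0; [exact: in_span0 | left].
  have n'n1 : det2 n' n1 = 0.
    rewrite /n' /det2 !mxE; transitivity (- v * det2 n1 n2); last by rewrite D mulr0.
    by rewrite /det2; ring.
  have n'n2 : det2 n' n2 = 0.
    rewrite /n' /det2 !mxE; transitivity (u * det2 n1 n2); last by rewrite D mulr0.
    by rewrite /det2; ring.
  have [|z hz] := exists_shift_det2_neq0 g0 _ n'n1 n'n2 span_w0; first by rewrite n'2.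
  by exists z => //; right.
exists (w0 + g *: z); first by rewrite addrAC; apply: in_spanD => //; exact: in_spanZ.
split.
  exists (k *: (w0 + g *: z) + (l - k * z 1 0) *: n'); last by rewrite !mxE -hg -hkl; ring.
  by apply: in_spanD; apply: in_spanZ; [exact/in_span_mem/mem_head | exact: hn'].
case: hdz => D; [exists (det2 n1 n2) | exists (det2 n' (w0 + g *: z))] => //.
  by apply: det2_in_span; apply: in_span_mem; rewrite !inE eqxx ?orbT.
by apply: det2_in_span; [exact: hn' | exact/in_span_mem/mem_head].
Qed.

Lemma spanning_stable_range2 (a1 a2 b1 b2 n1 n2 : 'cV[R]_2) :
  (n1 1 0 != 0) || (n2 1 0 != 0) -> spanning [:: a1; a2; b1; b2; n1; n2] ->
  exists t11 t21 t12 t22,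
    spanning [:: a1 + t11 *: b1 + t21 *: b2; a2 + t12 *: b1 + t22 *: b2; n1; n2].
Proof.
move=> n0 span_all.
have [w hw [[p hp p1] [c c0 hc]]] := exists_second_column n0 span_all.
have [t11 [t21 span1]] := exists_first_column (spanning_shift_second hw span_all) hp p1 c0 hc.
have /in_spanP[cs] := hw; rewrite big_ord3 /= => /(canRL (subrK a2)) hw2.
exists t11, t21, (cs`_1 - cs`_0 * t11), (cs`_2 - cs`_0 * t21).
have -> : a2 + (cs`_1 - cs`_0 * t11) *: b1 + (cs`_2 - cs`_0 * t21) *: b2 =
    w + (- cs`_0) *: (a1 + t11 *: b1 + t21 *: b2).
  by rewrite hw2; apply: cV2P; rewrite !mxE; ring.
apply: (spanning_shift (gs1 := [:: _])) span1.
by apply/in_spanZ/in_span_mem/mem_head.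
Qed.

Lemma mat2_stable_range_row1 (A B C : 'M[R]_2) : (C 1 0 != 0) || (C 1 1 != 0) ->
  left_coprime3 A B C -> exists T, left_coprime (A + B * T) C.
Proof.
move=> C1 [X [Y [Z hXYZ]]].
have span_ABC : spanning (cols A ++ cols B ++ cols C).
  by apply: (spanning_of_mulmx (X := X) (Y := Y) (Z := Z)); rewrite !mulmxE.
rewrite !cols2 /= in span_ABC.
have [|t11 [t21 [t12 [t22 span_T]]]] := spanning_stable_range2 _ span_ABC; first by rewrite !mxE.
exists (mx22 t11 t12 t21 t22); rewrite /left_coprime -!mulmxE; apply: mulmx_of_spanning.
by rewrite !cols2 /= !col_add_mul2 !mxE.
Qed.

Lemma mat2_stable_range_1_5_bezout : mat2_stable_range_1_5 R.
Proof.
move=> A B C C0 hABC; have [C1 | C1] := boolP ((C 1 0 != 0) || (C 1 1 != 0)).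
  exact: mat2_stable_range_row1.
pose P : 'M[R]_2 := mx22 0 1 1 0.
have uP : P \is a GRing.unit.
  by apply/unitrP; exists P; split; apply: mx2P; rewrite !mulmx2E !mxE /=; ring.
have [|T hT] := mat2_stable_range_row1 _ (left_coprime3_mull uP hABC).
  rewrite !mulmx2E !mxE /= !mul1r !mul0r !addr0.
  apply: contraNT C0 => /norP[/negPn/eqP C00 /negPn/eqP C01].
  by move: C1 => /norP[/negPn/eqP C10 /negPn/eqP C11]; apply/eqP/mx2P; rewrite !mxE.
by exists T; apply: (left_coprime_mull uP); rewrite mulrDr mulrA.
Qed.
End BezoutStableRange.

Lemma stable_range_1_5_of_mat2 (R : comNzRingType) : mat2_stable_range_1_5 R -> stable_range_1_5 R.
Proof.
move=> srM a b c c0 /in_idealP[cs]; rewrite big_ord3 /= => habc.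
pose A := mx22 a 0 0 1; pose B := mx22 b 0 0 0; pose C : 'M[R]_2 := c%:M.
have C0 : C != 0 by apply: contraNneq c0 => /matrixP/(_ 0 0)/eqP; rewrite !mxE.
have [|T [X [Y h]]] := srM A B C C0.
  exists (mx22 cs`_0 0 0 1), (mx22 cs`_1 0 0 0), (mx22 cs`_2 0 0 0).
  by apply: mx2P; rewrite !(mulmx2E, mxE) /=; [rewrite [RHS]habc | | |]; ring.
have := congr1 (fun M : 'M[R]_2 => M 1 0) h; have := congr1 (fun M : 'M[R]_2 => M 0 0) h.
rewrite !(mulmx2E, mxE) /= ?mulr0n ?mulr1n => h00 h10.
have X10 : X 1 0 = - (c * Y 1 0) by rewrite -[LHS]subr0 -[in LHS]h10; ring.
exists (T 0 0); apply/in_ideal2; exists (X 0 0), (Y 0 0 - b * T 0 1 * Y 1 0).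
by rewrite -[LHS]h00 X10; ring.
Qed.

Theorem theorem2p20 (R : idomainType) :
  bezout_domain R -> (mat2_stable_range_1_5 R <-> stable_range_1_5 R).
Proof.
move=> bezoutR; split; first exact: stable_range_1_5_of_mat2.
exact: mat2_stable_range_1_5_bezout.
Qed.
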